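(* Let $(\mathcal H,\mathfrak A_0)$ be a Hilbert quasi *-algebra. A linear functional $\omega$ on $\mathcal H$ belongs to $\mathcal R_c(\mathcal H,\mathfrak A_0)$ if and only if there exists a unique w-positive bounded element $\eta\in\mathcal H$ such that $\omega(\xi)=\langle\xi,\eta\rangle$ for all $\xi\in\mathcal H$.
   Context: A Hilbert algebra is a *-algebra $\mathfrak A_0$ with an inner product $\langle\cdot,\cdot\rangle$ such that (i) for each $x$, $y\mapsto xy$ is continuous for the inner product norm; (ii) $\langle xy,z\rangle=\langle y,x^*z\rangle$ for all $x,y,z$; (iii) $\langle x,y\rangle=\langle y^*,x^*\rangle$ for all $x,y$; (iv) the linear span of $\{xy:x,y\in\mathfrak A_0\}$ is dense in $\mathfrak A_0$. Let $\mathcal H$ be the Hilbert space completion of $\mathfrak A_0$; the involution extends isometrically to $\mathcal H$, and the products $\xi x$, $x\xi$ for $\xi\in\mathcal H$, $x\in\mathfrak A_0$ are defined by continuity. It is assumed that (A): if $\xi\in\mathcal H$ and $\xi x=0$ for all $x\in\mathfrak A_0$ then $\xi=0$. With these operations $(\mathcal H,\mathfrak A_0)$ is a Banach quasi *-algebra (norm from the inner product), called a Hilbert quasi *-algebra. A linear functional $\omega$ on $\mathcal H$ is representable if (L.1) $\omega(x^*x)\ge0$ for all $x\in\mathfrak A_0$; (L.2) $\omega(y^*\xi^*x)=\overline{\omega(x^*\xi y)}$ for all $x,y\in\mathfrak A_0$, $\xi\in\mathcal H$; (L.3) for every $\xi\in\mathcal H$ there is $\gamma_\xi>0$ with $|\omega(\xi^*x)|\le\gamma_\xi\,\omega(x^*x)^{1/2}$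 for all $x\in\mathfrak A_0$. $\mathcal R_c(\mathcal H,\mathfrak A_0)$ is the set of norm-continuous representable functionals. For $\xi\in\mathcal H$, $L_\xi x=\xi x$ ($x\in\mathfrak A_0$); $\xi$ is bounded if $L_\xi$ is bounded on $\mathfrak A_0$ (equivalently $x\mapsto x\xi$ is bounded). $\xi$ is w-positive if $\langle\xi x,x\rangle\ge0$ for all $x\in\mathfrak A_0$. *)

From Stdlib Require Import Reals List.
Open Scope R_scope.

Record Cplx : Type := mkC { Re : R; Im : R }.
Definition C0 : Cplx := mkC 0 0.
Definition C1 : Cplx := mkC 1 0.
Definition RtoC (r : R) : Cplx := mkC r 0.
Definition Cadd (a b : Cplx) : Cplx := mkC (Re a + Re b) (Im a + Im b).
Definition Copp (a : Cplx) : Cplx := mkC (- Re a) (- Im a).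
Definition Cmul (a b : Cplx) : Cplx :=
  mkC (Re a * Re b - Im a * Im b) (Re a * Im b + Im a * Re b).
Definition Cconj (a : Cplx) : Cplx := mkC (Re a) (- Im a).
Definition Cabs (a : Cplx) : R := sqrt (Re a * Re a + Im a * Im a).

(* ---------- Hilbert quasi *-algebras ----------
   H is the Hilbert space (completion of A0), A0 is a predicate on H singling
   out the *-algebra A0 sitting densely in H.  [mul] is the multiplication:
   it is only meaningful when at least one factor lies in A0 (ξ x and x ξ);
   its values on pairs with no factor in A0 are irrelevant junk and are never
   constrained or used.  [star] is the involution on all of H. *)
Record HilbertQuasiStarAlgebra : Type := {
  H :> Type;
  hadd : H -> H -> H;
  hzero : H;
  hopp : H -> H;
  hscal : Cplx -> H -> H;
  inner : H -> H -> Cplx;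
  A0 : H -> Prop;
  mul : H -> H -> H;
  star : H -> H;

  hadd_assoc : forall u v w, hadd u (hadd v w) = hadd (hadd u v) w;
  hadd_comm : forall u v, hadd u v = hadd v u;
  hadd_zero : forall u, hadd u hzero = u;
  hadd_opp : forall u, hadd u (hopp u) = hzero;
  hscal_one : forall u, hscal C1 u = u;
  hscal_mul : forall a b u, hscal a (hscal b u) = hscal (Cmul a b) u;
  hscal_addv : forall a u v, hscal a (hadd u v) = hadd (hscal a u) (hscal a v);
  hscal_adds : forall a b u, hscal (Cadd a b) u = hadd (hscal a u) (hscal b u);

  inner_addl : forall u v w, inner (hadd u v) w = Cadd (inner u w) (inner v w);
  inner_scall : forall a u w, inner (hscal a u) w = Cmul a (inner u w);
  inner_conj : forall u v, inner u v = Cconj (inner v u);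
  inner_pos : forall u, 0 <= Re (inner u u);
  inner_def : forall u, inner u u = C0 -> u = hzero;

  complete : forall s : nat -> H,
    (forall eps, 0 < eps -> exists N, forall m n, (N <= m)%nat -> (N <= n)%nat ->
        sqrt (Re (inner (hadd (s m) (hopp (s n))) (hadd (s m) (hopp (s n))))) < eps) ->
    exists l, forall eps, 0 < eps -> exists N, forall n, (N <= n)%nat ->
        sqrt (Re (inner (hadd (s n) (hopp l)) (hadd (s n) (hopp l)))) < eps;

  A0_zero : A0 hzero;
  A0_add : forall x y, A0 x -> A0 y -> A0 (hadd x y);
  A0_scal : forall a x, A0 x -> A0 (hscal a x);
  A0_mul : forall x y, A0 x -> A0 y -> A0 (mul x y);
  A0_star : forall x, A0 x -> A0 (star x);
  A0_dense : forall xi eps, 0 < eps -> exists x, A0 x /\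
    sqrt (Re (inner (hadd xi (hopp x)) (hadd xi (hopp x)))) < eps;

  mul_assoc : forall x y z, A0 x -> A0 y -> A0 z -> mul x (mul y z) = mul (mul x y) z;
  star_mul : forall x y, A0 x -> A0 y -> star (mul x y) = mul (star y) (star x);

  (* products ξ x and x ξ (x in A0): linear in each variable and continuous in ξ
     (they are the continuous extensions of the product of A0) *)
  mul_addl : forall x xi1 xi2, A0 x -> mul (hadd xi1 xi2) x = hadd (mul xi1 x) (mul xi2 x);
  mul_scall : forall x a xi, A0 x -> mul (hscal a xi) x = hscal a (mul xi x);
  mul_addr : forall x xi1 xi2, A0 x -> mul x (hadd xi1 xi2) = hadd (mul x xi1) (mul x xi2);
  mul_scalr : forall x a xi, A0 x -> mul x (hscal a xi) = hscal a (mul x xi);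
  mul_addl_A0 : forall xi x y, A0 x -> A0 y -> mul xi (hadd x y) = hadd (mul xi x) (mul xi y);
  mul_scall_A0 : forall xi a x, A0 x -> mul xi (hscal a x) = hscal a (mul xi x);
  mul_addr_A0 : forall xi x y, A0 x -> A0 y -> mul (hadd x y) xi = hadd (mul x xi) (mul y xi);
  mul_scalr_A0 : forall xi a x, A0 x -> mul (hscal a x) xi = hscal a (mul x xi);
  mul_contl : forall x, A0 x -> exists M, forall xi,
    Re (inner (mul xi x) (mul xi x)) <= M * Re (inner xi xi);
  mul_contr : forall x, A0 x -> exists M, forall xi,
    Re (inner (mul x xi) (mul x xi)) <= M * Re (inner xi xi);

  star_add : forall u v, star (hadd u v) = hadd (star u) (star v);
  star_scal : forall a u, star (hscal a u) = hscal (Cconj a) (star u);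
  star_invol : forall u, star (star u) = u;
  star_isom : forall u, Re (inner (star u) (star u)) = Re (inner u u);

  hilb_ii : forall x y z, A0 x -> A0 y -> A0 z ->
    inner (mul x y) z = inner y (mul (star x) z);
  hilb_iii : forall x y, A0 x -> A0 y -> inner x y = inner (star y) (star x);
  hilb_iv : forall x eps, A0 x -> 0 < eps ->
    exists l : list (Cplx * H * H),
      (forall c a b, In (c, a, b) l -> A0 a /\ A0 b) /\
      let s := fold_right (fun t acc => match t with (c, a, b) =>
                  hadd (hscal c (mul a b)) acc end) hzero l in
      sqrt (Re (inner (hadd x (hopp s)) (hadd x (hopp s)))) < eps;

  (* assumption (A) *)
  cond_A : forall xi, (forall x, A0 x -> mul xi x = hzero) -> xi = hzero
}.

Section Notions.
Variable A : HilbertQuasiStarAlgebra.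

Definition hnorm (u : A) : R := sqrt (Re (inner A u u)).

Definition linear_functional (w : A -> Cplx) : Prop :=
  (forall u v, w (hadd A u v) = Cadd (w u) (w v)) /\
  (forall a u, w (hscal A a u) = Cmul a (w u)).

(* representable functionals: (L.1), (L.2), (L.3) *)
Definition representable (w : A -> Cplx) : Prop :=
  (forall x, A0 A x -> Im (w (mul A (star A x) x)) = 0 /\
                        0 <= Re (w (mul A (star A x) x))) /\
  (forall x y (xi : A), A0 A x -> A0 A y ->
     w (mul A (star A y) (mul A (star A xi) x)) =
     Cconj (w (mul A (star A x) (mul A xi y)))) /\
  (forall xi : A, exists g, 0 < g /\ forall x, A0 A x ->
     Cabs (w (mul A (star A xi) x)) <= g * sqrt (Re (w (mul A (star A x) x)))).

Definition norm_continuous (w : A -> Cplx) : Prop :=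
  exists M, forall u : A, Cabs (w u) <= M * hnorm u.

Definition Rc (w : A -> Cplx) : Prop := representable w /\ norm_continuous w.

Definition bounded_elt (xi : A) : Prop :=
  exists M, forall x, A0 A x -> hnorm (mul A xi x) <= M * hnorm x.

Definition w_positive (xi : A) : Prop :=
  forall x, A0 A x -> Im (inner A (mul A xi x) x) = 0 /\
                     0 <= Re (inner A (mul A xi x) x).
End Notions.

(* If w is continuous, the Riesz theorem gives w = <., eta>.  Since w(x x^* ) = <eta x, x>,
   (L.1) makes eta w-positive.  By (L.3) the vectors eta x^*, weighted by w(x^* x)^(1/2), are
   weakly bounded, so uniform boundedness gives |eta y|^2 <= C^2 w(y y^* ) = C^2 <y, eta y>
   <= C^2 |y| |eta y|: eta is bounded.
   Conversely, for eta w-positive the form <eta x, y> on A0 is hermitian, so eta and eta^*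
   have the same products with A0 and eta = eta^* by (A); this makes (L.2) an identity.
   Cauchy-Schwarz for the positive form gives |eta y|^2 <= |L_eta| <eta y, y>, which is (L.3).
   Throughout, the Hilbert algebra identities pass from A0 to H by density, both sides being
   continuous. *)

From Stdlib Require Import Reals Lra Lia Psatz Classical ClassicalEpsilon.
Open Scope R_scope.

Lemma Cext (a b : Cplx) : Re a = Re b -> Im a = Im b -> a = b.
Proof. destruct a, b; simpl; intros; subst; reflexivity. Qed.

Ltac csimpl := unfold Cmul, Cadd, Copp, Cconj, C0, C1, RtoC in *; simpl in *.
Ltac cring := apply Cext; csimpl; ring.

Lemma Cabs_ge0 a : 0 <= Cabs a.
Proof. apply sqrt_pos. Qed.

Lemma Cabs_sqr a : Cabs a * Cabs a = Re a * Re a + Im a * Im a.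
Proof. apply sqrt_sqrt. nra. Qed.

Lemma Cabs_le_sqr a x : 0 <= x -> Re a * Re a + Im a * Im a <= x * x -> Cabs a <= x.
Proof. intros Hx H. pose proof (Cabs_sqr a). pose proof (Cabs_ge0 a). nra. Qed.

Lemma Rabs_Re_le_Cabs a : Rabs (Re a) <= Cabs a.
Proof.
  pose proof (Cabs_sqr a). pose proof (Cabs_ge0 a).
  apply Rsqr_incr_0_var; [|assumption]. rewrite <- Rsqr_abs. unfold Rsqr. nra.
Qed.

Lemma Re_le_Cabs a : Re a <= Cabs a.
Proof. pose proof (Rabs_Re_le_Cabs a). pose proof (Rle_abs (Re a)). lra. Qed.

Lemma Cabs_add a b : Cabs (Cadd a b) <= Cabs a + Cabs b.
Proof.
  pose proof (Cabs_sqr a) as Sa. pose proof (Cabs_sqr b) as Sb.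
  pose proof (Cabs_ge0 a). pose proof (Cabs_ge0 b).
  assert (Hdot : Re a * Re b + Im a * Im b <= Cabs a * Cabs b).
  { apply Rsqr_incr_0_var; [unfold Rsqr | nra].
    replace (Cabs a * Cabs b * (Cabs a * Cabs b)) with
      ((Cabs a * Cabs a) * (Cabs b * Cabs b)) by ring.
    rewrite Sa, Sb. pose proof (Rle_0_sqr (Re a * Im b - Im a * Re b)). unfold Rsqr in *. nra. }
  apply Cabs_le_sqr; [lra |]. csimpl. nra.
Qed.

Lemma Cabs_opp a : Cabs (Copp a) = Cabs a.
Proof. unfold Cabs. csimpl. f_equal. ring. Qed.

Lemma Cabs_eq0 a : Cabs a = 0 -> a = C0.
Proof. intro H. pose proof (Cabs_sqr a). rewrite H in *. apply Cext; csimpl; nra. Qed.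

Lemma Cabs_real r : Cabs (mkC r 0) = Rabs r.
Proof. unfold Cabs. simpl. rewrite Rmult_0_l, Rplus_0_r. apply sqrt_Rsqr_abs. Qed.

Lemma nat_above x : exists n : nat, x < INR n + 1.
Proof. destruct (INR_archimed 1 x Rlt_0_1) as [n Hn]. exists n. lra. Qed.

Lemma quadratic_discriminant a c d : 0 <= c -> 0 <= d ->
  (forall t, 0 <= a - 2 * t * c + t * t * c * d) -> c <= a * d.
Proof.
  intros Hc Hd H. destruct (Rle_lt_dec d 0).
  - assert (d = 0) by lra. subst. destruct (Rle_lt_dec c 0); [nra |].
    specialize (H ((Rabs a + 1) / (2 * c))).
    assert (2 * ((Rabs a + 1) / (2 * c)) * c = Rabs a + 1) by (field; lra).
    pose proof (Rle_abs a). nra.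
  - specialize (H (/ d)).
    replace (a - 2 * / d * c + / d * / d * c * d) with ((a * d - c) / d) in H by (field; lra).
    apply Rmult_le_compat_r with (r := d) in H; [| lra].
    replace ((a * d - c) / d * d) with (a * d - c) in H by (field; lra). lra.
Qed.

Lemma quadratic_nonneg_linear_coef a b : 0 <= a -> (forall t, 0 <= t * t * a + t * b) -> b = 0.
Proof.
  intros Ha H. destruct (Req_dec b 0) as [|Hb]; auto. exfalso.
  specialize (H (- b / (a + 1))).
  replace (- b / (a + 1) * (- b / (a + 1)) * a + - b / (a + 1) * b)
    with (- (b * b) / ((a + 1) * (a + 1))) in H by (field; lra).
  assert (0 < b * b / ((a + 1) * (a + 1))).
  { apply Rdiv_lt_0_compat; [destruct (Rlt_le_dec b 0); nra | nra]. }
  unfold Rdiv in *. lra.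
Qed.

Notation "u +h v" := (hadd _ u v) (at level 50, left associativity).
Notation "a *h u" := (hscal _ a u) (at level 40).
Notation "<< u , v >>" := (inner _ u v).
Notation "u @ v" := (mul _ u v) (at level 30).
Notation "u ^*" := (star _ u) (at level 2).
Notation "0h" := (hzero _).
Notation nsq u := (Re (inner _ u u)).
Notation m1 := (mkC (-1) 0).

Definition hsub {A : HilbertQuasiStarAlgebra} (u v : A) : A := u +h hopp A v.

Section HilbertSpace.
Context {A : HilbertQuasiStarAlgebra}.
Implicit Types u v z : A.

Lemma hadd_0l u : 0h +h u = u.
Proof. rewrite hadd_comm. apply hadd_zero. Qed.

Lemma hadd_cancel_l u v : u = u +h v -> v = 0h.
Proof.
  intro E. transitivity (hopp A u +h u +h v).
  - rewrite (hadd_comm A (hopp A u)), hadd_opp. symmetry. apply hadd_0l.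
  - rewrite <- hadd_assoc, <- E, hadd_comm. apply hadd_opp.
Qed.

Lemma hscal_0 u : mkC 0 0 *h u = 0h.
Proof. apply (hadd_cancel_l (mkC 0 0 *h u)). rewrite <- hscal_adds. f_equal. cring. Qed.

Lemma hopp_unique u v : u +h v = 0h -> v = hopp A u.
Proof.
  intro E. transitivity (v +h (u +h hopp A u)).
  - rewrite hadd_opp, hadd_zero. reflexivity.
  - rewrite hadd_assoc, (hadd_comm A v u), E. apply hadd_0l.
Qed.

Lemma hopp_scal u : hopp A u = m1 *h u.
Proof.
  symmetry. apply hopp_unique. rewrite <- (hscal_one A u) at 1.
  rewrite <- hscal_adds, <- (hscal_0 u). f_equal. cring.
Qed.

Lemma hsub_scal u v : hsub u v = u +h m1 *h v.
Proof. unfold hsub. rewrite hopp_scal. reflexivity. Qed.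

Lemma inner_addr u v z : << u, v +h z >> = Cadd << u, v >> << u, z >>.
Proof. rewrite inner_conj, inner_addl, (inner_conj A v u), (inner_conj A z u). cring. Qed.

Lemma inner_scalr a u v : << u, a *h v >> = Cmul (Cconj a) << u, v >>.
Proof. rewrite inner_conj, inner_scall, (inner_conj A v u). cring. Qed.

Lemma inner_0l v : << 0h, v >> = C0.
Proof. rewrite <- (hscal_0 0h), inner_scall. cring. Qed.

Lemma inner_Im_diag u : Im << u, u >> = 0.
Proof. pose proof (f_equal Im (inner_conj A u u)). csimpl. lra. Qed.

Lemma inner_Re_sym u v : Re << u, v >> = Re << v, u >>.
Proof. rewrite inner_conj. reflexivity. Qed.

Lemma nsq_add u v : nsq (u +h v) = nsq u + nsq v + 2 * Re << u, v >>.
Proof. rewrite inner_addl, !inner_addr. csimpl. rewrite (inner_Re_sym v u). ring. Qed.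

Lemma nsq_scal a u : nsq (a *h u) = (Re a * Re a + Im a * Im a) * nsq u.
Proof. rewrite inner_scall, inner_scalr. csimpl. rewrite (inner_Im_diag u). ring. Qed.

Lemma nsq_hsub u v : nsq (hsub u v) = nsq u + nsq v - 2 * Re << u, v >>.
Proof. rewrite hsub_scal, nsq_add, nsq_scal, inner_scalr. csimpl. ring. Qed.

Lemma inner_ext u v : (forall z, << u, z >> = << v, z >>) -> u = v.
Proof.
  intro E. assert (D : hsub u v = 0h).
  { apply inner_def. unfold hsub at 1. rewrite hopp_scal, inner_addl, inner_scall, E. cring. }
  unfold hsub in D. transitivity (u +h (hopp A v +h v)).
  - rewrite (hadd_comm A (hopp A v)), hadd_opp, hadd_zero. reflexivity.
  - rewrite hadd_assoc, D. apply hadd_0l.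
Qed.

End HilbertSpace.

(* Proves a vector identity by pairing both sides with an arbitrary vector. *)
Ltac vring := apply inner_ext; let z := fresh "z" in intro z; unfold hsub;
  rewrite ?hopp_scal; repeat (rewrite inner_addl || rewrite inner_scall || rewrite inner_0l); cring.

Lemma cauchy_schwarz_form {A : HilbertQuasiStarAlgebra} (B : A -> A -> Cplx) (D : A -> Prop) :
  (forall u v, D u -> D v -> D (u +h v)) ->
  (forall a u, D u -> D (a *h u)) ->
  (forall u v z, D u -> D v -> D z -> B (u +h v) z = Cadd (B u z) (B v z)) ->
  (forall a u z, D u -> D z -> B (a *h u) z = Cmul a (B u z)) ->
  (forall u v, D u -> D v -> B u v = Cconj (B v u)) ->
  (forall u, D u -> 0 <= Re (B u u)) ->
  forall u v, D u -> D v ->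
    Re (B u v) * Re (B u v) + Im (B u v) * Im (B u v) <= Re (B u u) * Re (B v v).
Proof.
  intros Dadd Dscal Badd Bscal Bherm Bpos u v Du Dv.
  set (b := B u v).
  apply quadratic_discriminant; [nra | apply Bpos; auto |].
  intro t. set (l := mkC (- t * Re b) (- t * Im b)).
  assert (Dl : D (l *h v)) by auto.
  pose proof (Bpos (u +h l *h v) ltac:(auto)) as P.
  rewrite Badd, Bscal, (Bherm u), (Bherm v), !Badd, !Bscal, (Bherm v u) in P by auto.
  fold b in P.
  assert (Iv : Im (B v v) = 0).
  { pose proof (f_equal Im (Bherm v v Dv Dv)). csimpl. lra. }
  unfold l in P. csimpl. rewrite Iv in P. nra.
Qed.

Section Norm.
Context {A : HilbertQuasiStarAlgebra}.
Implicit Types u v z : A.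

Lemma hnorm_ge0 u : 0 <= hnorm A u.
Proof. apply sqrt_pos. Qed.

Lemma hnorm_sqr u : hnorm A u * hnorm A u = nsq u.
Proof. apply sqrt_sqrt, inner_pos. Qed.

Lemma hnorm_le_sqr u x : 0 <= x -> nsq u <= x * x -> hnorm A u <= x.
Proof. intros. pose proof (hnorm_sqr u). pose proof (hnorm_ge0 u). nra. Qed.

Lemma cauchy_schwarz u v : Cabs << u, v >> <= hnorm A u * hnorm A v.
Proof.
  pose proof (hnorm_ge0 u). pose proof (hnorm_ge0 v).
  apply Cabs_le_sqr; [nra |].
  replace (hnorm A u * hnorm A v * (hnorm A u * hnorm A v)) with
    ((hnorm A u * hnorm A u) * (hnorm A v * hnorm A v)) by ring.
  rewrite !hnorm_sqr.
  apply (cauchy_schwarz_form (inner A) (fun _ => True)); auto;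
    intros; [apply inner_addl | apply inner_scall | apply inner_conj | apply inner_pos].
Qed.

Lemma hnorm_triangle u v : hnorm A (u +h v) <= hnorm A u + hnorm A v.
Proof.
  pose proof (hnorm_ge0 u); pose proof (hnorm_ge0 v).
  apply hnorm_le_sqr; [lra |]. rewrite nsq_add.
  pose proof (cauchy_schwarz u v). pose proof (Re_le_Cabs << u, v >>).
  pose proof (hnorm_sqr u); pose proof (hnorm_sqr v). nra.
Qed.

Lemma hnorm_scal a u : hnorm A (a *h u) = Cabs a * hnorm A u.
Proof. unfold hnorm, Cabs. rewrite nsq_scal, sqrt_mult; [reflexivity | nra | apply inner_pos]. Qed.

Lemma hnorm_star u : hnorm A (u^*) = hnorm A u.
Proof. unfold hnorm. rewrite star_isom. reflexivity. Qed.

Lemma hnorm_0 : hnorm A 0h = 0.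
Proof. unfold hnorm. rewrite inner_0l. apply sqrt_0. Qed.

Lemma hsub_add u v : hsub u v +h v = u.
Proof. vring. Qed.

Lemma hnorm_hsub_sym u v : hnorm A (hsub u v) = hnorm A (hsub v u).
Proof.
  replace (hsub v u) with (m1 *h hsub u v) by vring.
  rewrite hnorm_scal, Cabs_real, Rabs_left by lra. ring.
Qed.

Lemma hnorm_hsub_triangle u v z : hnorm A (hsub u z) <= hnorm A (hsub u v) + hnorm A (hsub v z).
Proof. replace (hsub u z) with (hsub u v +h hsub v z) by vring. apply hnorm_triangle. Qed.

Lemma hnorm_le_hsub u v : hnorm A v <= hnorm A u + hnorm A (hsub u v).
Proof. rewrite <- (hsub_add v u) at 1. rewrite hnorm_hsub_sym, Rplus_comm. apply hnorm_triangle. Qed.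

End Norm.

(** * Extension from A0 by density *)

Section Density.
Context {A : HilbertQuasiStarAlgebra}.
Implicit Types u v z : A.

Definition additive_fun (f : A -> Cplx) := forall u v, f (u +h v) = Cadd (f u) (f v).
Definition additive_map (f : A -> A) := forall u v, f (u +h v) = f u +h f v.
Definition bounded_map (f : A -> A) := exists M, forall u, hnorm A (f u) <= M * hnorm A u.

Lemma bounded_map_nonneg (f : A -> A) :
  bounded_map f -> exists M, 0 <= M /\ forall u, hnorm A (f u) <= M * hnorm A u.
Proof.
  intros [M HM]. exists (Rabs M). split; [apply Rabs_pos |]. intro u.
  eapply Rle_trans; [apply HM |]. apply Rmult_le_compat_r; [apply hnorm_ge0 | apply Rle_abs].
Qed.

Lemma norm_bound_from_A0 (f : A -> Cplx) K :
  additive_fun f -> norm_continuous A f -> 0 <= K ->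
  (forall x, A0 A x -> Cabs (f x) <= K * hnorm A x) ->
  forall u, Cabs (f u) <= K * hnorm A u.
Proof.
  intros Hadd [M HM] HK H u. apply Rle_plus_epsilon. intros e He.
  set (d := e / (Rabs M + K + 1)).
  assert (Hd : 0 < d) by (pose proof (Rabs_pos M); apply Rdiv_lt_0_compat; lra).
  destruct (A0_dense A u d Hd) as [x [Hx Hux]]. change (hnorm A (hsub u x) < d) in Hux.
  replace (f u) with (Cadd (f (hsub u x)) (f x)) by (rewrite <- Hadd, hsub_add; reflexivity).
  pose proof (Cabs_add (f (hsub u x)) (f x)).
  pose proof (HM (hsub u x)). pose proof (H x Hx).
  pose proof (hnorm_le_hsub u x). pose proof (Rle_abs M). pose proof (hnorm_ge0 (hsub u x)).
  assert (M * hnorm A (hsub u x) <= Rabs M * d).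
  { apply Rle_trans with (Rabs M * hnorm A (hsub u x)).
    - apply Rmult_le_compat_r; lra.
    - apply Rmult_le_compat_l; [apply Rabs_pos | lra]. }
  assert (K * hnorm A x <= K * hnorm A u + K * d).
  { rewrite <- Rmult_plus_distr_l. apply Rmult_le_compat_l; lra. }
  assert (e = Rabs M * d + K * d + d) by (unfold d; field; pose proof (Rabs_pos M); lra).
  lra.
Qed.

Lemma functional_eq_from_A0 (f g : A -> Cplx) :
  additive_fun f -> norm_continuous A f -> additive_fun g -> norm_continuous A g ->
  (forall x, A0 A x -> f x = g x) -> forall u, f u = g u.
Proof.
  intros Af [M1 B1] Ag [M2 B2] H u.
  set (h := fun u => Cadd (f u) (Copp (g u))).
  assert (Hh : Cabs (h u) <= 0 * hnorm A u).
  { apply norm_bound_from_A0; [| | lra |].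
    - intros a b. unfold h. rewrite Af, Ag. cring.
    - exists (M1 + M2). intro v. eapply Rle_trans; [apply Cabs_add |].
      rewrite Cabs_opp. pose proof (B1 v); pose proof (B2 v). lra.
    - intros x Hx. unfold h. rewrite H by assumption.
      replace (Cadd (g x) (Copp (g x))) with C0 by cring.
      unfold Cabs. simpl. rewrite Rmult_0_l, Rplus_0_l, sqrt_0. lra. }
  assert (E : h u = C0) by (apply Cabs_eq0; pose proof (Cabs_ge0 (h u)); lra).
  unfold h in E. pose proof (f_equal Re E); pose proof (f_equal Im E).
  apply Cext; csimpl; lra.
Qed.

Lemma additive_inner_l (f : A -> A) z : additive_map f -> additive_fun (fun u => << f u, z >>).
Proof. intros Hf u v. rewrite Hf, inner_addl. reflexivity. Qed.

Lemma additive_inner_r (f : A -> A) z : additive_map f -> additive_fun (fun u => << z, f u >>).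
Proof. intros Hf u v. rewrite Hf, inner_addr. reflexivity. Qed.

Lemma continuous_inner_l (f : A -> A) z :
  bounded_map f -> norm_continuous A (fun u => << f u, z >>).
Proof.
  intros Hf. destruct (bounded_map_nonneg f Hf) as [M [_ B]]. exists (M * hnorm A z). intro u.
  eapply Rle_trans; [apply cauchy_schwarz |]. pose proof (hnorm_ge0 z). pose proof (B u).
  replace (M * hnorm A z * hnorm A u) with (M * hnorm A u * hnorm A z) by ring.
  apply Rmult_le_compat_r; auto.
Qed.

Lemma continuous_inner_r (f : A -> A) z :
  bounded_map f -> norm_continuous A (fun u => << z, f u >>).
Proof.
  intros Hf. destruct (bounded_map_nonneg f Hf) as [M [_ B]]. exists (M * hnorm A z). intro u.
  eapply Rle_trans; [apply cauchy_schwarz |]. pose proof (hnorm_ge0 z). pose proof (B u).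
  replace (M * hnorm A z * hnorm A u) with (hnorm A z * (M * hnorm A u)) by ring.
  apply Rmult_le_compat_l; auto.
Qed.

Lemma map_eq_from_A0 (f g : A -> A) :
  additive_map f -> bounded_map f -> additive_map g -> bounded_map g ->
  (forall x, A0 A x -> f x = g x) -> forall u, f u = g u.
Proof.
  intros Af Bf Ag Bg H u. apply inner_ext. intro z.
  apply (functional_eq_from_A0 (fun u => << f u, z >>) (fun u => << g u, z >>));
    auto using additive_inner_l, continuous_inner_l.
  intros x Hx. rewrite H; auto.
Qed.

Lemma additive_id : additive_map (fun u => u).
Proof. intros u v. reflexivity. Qed.

Lemma bounded_id : bounded_map (fun u => u).
Proof. exists 1. intro. lra. Qed.

Lemma additive_comp (f g : A -> A) : additive_map f -> additive_map g -> additive_map (fun u => f (g u)).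
Proof. intros Hf Hg u v. rewrite Hg, Hf. reflexivity. Qed.

Lemma bounded_comp (f g : A -> A) : bounded_map f -> bounded_map g -> bounded_map (fun u => f (g u)).
Proof.
  intros Hf Hg. destruct (bounded_map_nonneg f Hf) as [M1 [P1 B1]].
  destruct (bounded_map_nonneg g Hg) as [M2 [P2 B2]].
  exists (M1 * M2). intro u. eapply Rle_trans; [apply B1 |]. rewrite Rmult_assoc.
  apply Rmult_le_compat_l; auto.
Qed.

Lemma additive_star : additive_map (star A).
Proof. intros u v. apply star_add. Qed.

Lemma bounded_star : bounded_map (star A).
Proof. exists 1. intro u. rewrite hnorm_star. lra. Qed.

Lemma additive_lmul x : A0 A x -> additive_map (fun u => x @ u).
Proof. intros Hx u v. apply mul_addr; auto. Qed.

Lemma additive_rmul x : A0 A x -> additive_map (fun u => u @ x).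
Proof. intros Hx u v. apply mul_addl; auto. Qed.

Lemma bounded_of_sqr_bound (f : A -> A) M :
  (forall u, nsq (f u) <= M * nsq u) -> bounded_map f.
Proof.
  intros HM. exists (sqrt (Rabs M)). intro u.
  unfold hnorm. rewrite <- sqrt_mult by (apply Rabs_pos || apply inner_pos).
  apply sqrt_le_1_alt. eapply Rle_trans; [apply HM |].
  apply Rmult_le_compat_r; [apply inner_pos | apply Rle_abs].
Qed.

Lemma bounded_lmul x : A0 A x -> bounded_map (fun u => x @ u).
Proof. intros Hx. destruct (mul_contr A x Hx) as [M HM]. exact (bounded_of_sqr_bound _ M HM). Qed.

Lemma bounded_rmul x : A0 A x -> bounded_map (fun u => u @ x).
Proof. intros Hx. destruct (mul_contl A x Hx) as [M HM]. exact (bounded_of_sqr_bound _ M HM). Qed.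

End Density.

Ltac solve_additive := first
  [ apply additive_id | apply additive_star
  | apply additive_lmul; auto using A0_star | apply additive_rmul; auto using A0_star
  | apply additive_comp; solve_additive ].
Ltac solve_bounded := first
  [ apply bounded_id | apply bounded_star
  | apply bounded_lmul; auto using A0_star | apply bounded_rmul; auto using A0_star
  | apply bounded_comp; solve_bounded ].

(* Reduces an identity between continuous additive expressions to its instances on [A0]. *)
Ltac by_density := first
  [ apply map_eq_from_A0; [solve_additive | solve_bounded | solve_additive | solve_bounded |]
  | apply functional_eq_from_A0;
    [ first [apply additive_inner_l | apply additive_inner_r]; solve_additive
    | first [apply continuous_inner_l | apply continuous_inner_r]; solve_bounded
    | first [apply additive_inner_l | apply additive_inner_r]; solve_additive
    | first [apply continuous_inner_l | apply continuous_inner_r]; solve_bounded | ] ].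

Section ExtendedIdentities.
Context {A : HilbertQuasiStarAlgebra}.
Implicit Types u v z xi : A.

Lemma inner_star u v : << u, v >> = << v^*, u^* >>.
Proof.
  assert (on_A0 : forall y, A0 A y -> forall u, << u, y >> = << y^*, u^* >>).
  { intros y Hy. by_density. intros; apply hilb_iii; auto. }
  revert v. by_density. intros; apply on_A0; auto.
Qed.

Lemma inner_lmul x xi z : A0 A x -> << x @ xi, z >> = << xi, x^* @ z >>.
Proof.
  intro Hx.
  assert (on_A0 : forall y, A0 A y -> forall z, << x @ y, z >> = << y, x^* @ z >>).
  { intros y Hy. by_density. intros; apply hilb_ii; auto. }
  revert xi. by_density. intros; apply on_A0; auto.
Qed.

Lemma star_rmul xi x : A0 A x -> (xi @ x)^* = x^* @ xi^*.
Proof. intro Hx. revert xi. by_density. intros; apply star_mul; auto. Qed.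

Lemma star_lmul x xi : A0 A x -> (x @ xi)^* = xi^* @ x^*.
Proof.
  intro Hx. pose proof (star_rmul (xi^*) (x^*) (A0_star A x Hx)) as E.
  rewrite !star_invol in E. rewrite <- E, star_invol. reflexivity.
Qed.

Lemma inner_rmul_A0 a x y : A0 A a -> A0 A x -> A0 A y -> << a @ x, y >> = << a, y @ x^* >>.
Proof.
  intros Ha Hx Hy.
  rewrite hilb_iii, star_mul, inner_conj, hilb_ii, star_invol, <- inner_conj, hilb_iii,
    star_invol, star_mul, star_invol by auto using A0_star, A0_mul.
  reflexivity.
Qed.

Lemma inner_rmul xi x z : A0 A x -> << xi @ x, z >> = << xi, z @ x^* >>.
Proof.
  intro Hx.
  assert (on_A0 : forall a, A0 A a -> forall z, << a @ x, z >> = << a, z @ x^* >>).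
  { intros a Ha. by_density. intros; apply inner_rmul_A0; auto. }
  revert xi. by_density. intros; apply on_A0; auto.
Qed.

Lemma mul_assoc_A0 y xi z : A0 A y -> A0 A z -> y @ (xi @ z) = (y @ xi) @ z.
Proof.
  intros Hy Hz. revert xi.
  apply map_eq_from_A0; [solve_additive | solve_bounded | | | intros; apply mul_assoc; auto].
  - apply (additive_comp (fun u => u @ z) (fun u => y @ u)); solve_additive.
  - apply (bounded_comp (fun u => u @ z) (fun u => y @ u)); solve_bounded.
Qed.

End ExtendedIdentities.

(** * Riesz representation *)

Lemma inv_succ_small e : 0 < e -> exists N, forall n, (N <= n)%nat -> / (INR n + 1) < e.
Proof.
  intro He. destruct (nat_above (/ e)) as [N HN]. exists N. intros n Hn.
  apply le_INR in Hn. pose proof (pos_INR N).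
  rewrite <- (Rinv_inv e). apply Rinv_lt_contravar; [| lra].
  apply Rmult_lt_0_compat; [apply Rinv_0_lt_compat |]; lra.
Qed.

Lemma approx_infimum {T : Type} (f : T -> R) b (t0 : T) :
  (forall t, b <= f t) ->
  exists m, (forall t, m <= f t) /\ forall e, 0 < e -> exists t, f t < m + e.
Proof.
  intro Hb.
  destruct (completeness (fun r => exists t, r = - f t)) as [S [HS1 HS2]].
  { exists (- b). intros r [t ->]. pose proof (Hb t). lra. }
  { exists (- f t0). exists t0. reflexivity. }
  exists (- S). split.
  - intro t. assert (- f t <= S) by (apply HS1; exists t; reflexivity). lra.
  - intros e He. apply NNPP. intro Hn.
    assert (S <= S - e); [| lra].
    apply HS2. intros r [t ->]. apply Rnot_lt_le. intro Ht. apply Hn. exists t. lra.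
Qed.

Definition cauchy {A : HilbertQuasiStarAlgebra} (s : nat -> A) := forall e, 0 < e ->
  exists N, forall m n, (N <= m)%nat -> (N <= n)%nat -> hnorm A (hsub (s m) (s n)) < e.

Definition converges {A : HilbertQuasiStarAlgebra} (s : nat -> A) (l : A) := forall e, 0 < e ->
  exists N, forall n, (N <= n)%nat -> hnorm A (hsub (s n) l) < e.

Lemma cauchy_converges {A : HilbertQuasiStarAlgebra} (s : nat -> A) :
  cauchy s -> exists l, converges s l.
Proof. exact (complete A s). Qed.

Lemma hnorm_lt_sqr {A : HilbertQuasiStarAlgebra} (u : A) e : 0 < e -> nsq u < e * e -> hnorm A u < e.
Proof. intros. pose proof (hnorm_sqr u). pose proof (hnorm_ge0 u). nra. Qed.

(* The Riesz vector of [w] is the minimiser of [|u|^2/2 - Re w(u)]. *)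
Definition riesz_energy {A : HilbertQuasiStarAlgebra} (w : A -> Cplx) (u : A) : R :=
  nsq u / 2 - Re (w u).

Section Riesz.
Context {A : HilbertQuasiStarAlgebra} (w : A -> Cplx) (hw : linear_functional A w).
Implicit Types u v l z : A.
Notation energy := (riesz_energy w).

Lemma energy_midpoint u v :
  nsq (hsub u v) / 4 = energy u + energy v - 2 * energy (mkC (1/2) 0 *h (u +h v)).
Proof.
  destruct hw as [w_add w_scal]. unfold riesz_energy.
  rewrite nsq_hsub, nsq_scal, nsq_add, w_scal, w_add. csimpl. field.
Qed.

Lemma energy_shift l v t : energy (l +h mkC t 0 *h v) =
  energy l + t * t * (nsq v / 2) + t * (Re << l, v >> - Re (w v)).
Proof.
  destruct hw as [w_add w_scal]. unfold riesz_energy.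
  rewrite nsq_add, nsq_scal, w_add, w_scal, inner_scalr. csimpl. field.
Qed.

Lemma energy_minimizer_represents l : (forall z, energy l <= energy z) ->
  forall xi, w xi = << xi, l >>.
Proof.
  intro Hmin.
  assert (HRe : forall v, Re (w v) = Re << v, l >>).
  { intro v. rewrite <- inner_Re_sym.
    enough (Re << l, v >> - Re (w v) = 0) by lra.
    apply (quadratic_nonneg_linear_coef (nsq v / 2)); [pose proof (inner_pos A v); lra |].
    intro t. pose proof (Hmin (l +h mkC t 0 *h v)). rewrite energy_shift in H. lra. }
  intro xi. apply Cext; [apply HRe |].
  pose proof (HRe (mkC 0 1 *h xi)) as Hi. destruct hw as [_ w_scal].
  rewrite w_scal, inner_scall in Hi. csimpl. lra.
Qed.

Context (M : R) (HM : forall u, Cabs (w u) <= M * hnorm A u).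

Lemma energy_lower_bound u : - (M * M) / 2 <= energy u.
Proof.
  unfold riesz_energy. pose proof (HM u). pose proof (Re_le_Cabs (w u)).
  rewrite <- hnorm_sqr. pose proof (Rle_0_sqr (hnorm A u - M)). unfold Rsqr in *. nra.
Qed.

Lemma energy_perturb l d : energy l <= energy (hsub l d) + (hnorm A l + M) * hnorm A d.
Proof.
  destruct hw as [w_add w_scal]. unfold riesz_energy.
  rewrite nsq_hsub, hsub_scal, w_add, w_scal. csimpl.
  pose proof (cauchy_schwarz l d). pose proof (Re_le_Cabs << l, d >>).
  pose proof (HM d). pose proof (Rabs_Re_le_Cabs (w d)). pose proof (Rle_abs (- Re (w d))).
  rewrite Rabs_Ropp in *. pose proof (inner_pos A d). nra.
Qed.

Lemma energy_minimizing_cauchy (s : nat -> A) m : (forall u, m <= energy u) ->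
  (forall n, energy (s n) < m + / (INR n + 1)) -> cauchy s.
Proof.
  intros Hm Hs e He.
  destruct (inv_succ_small (e * e / 8)) as [N HN]; [nra |].
  exists N. intros n k Hn Hk. apply hnorm_lt_sqr; [lra |].
  pose proof (energy_midpoint (s n) (s k)). pose proof (Hm (mkC (1 / 2) 0 *h (s n +h s k))).
  pose proof (Hs n). pose proof (Hs k). pose proof (HN n Hn). pose proof (HN k Hk). lra.
Qed.

Lemma energy_minimizer_exists : exists l, forall z, energy l <= energy z.
Proof.
  destruct (approx_infimum energy _ 0h energy_lower_bound) as [m [Hm Hinf]].
  destruct (choice (fun n u => energy u < m + / (INR n + 1))) as [s Hs].
  { intro n. apply Hinf. apply Rinv_0_lt_compat. pose proof (pos_INR n). lra. }
  destruct (cauchy_converges s (energy_minimizing_cauchy s m Hm Hs)) as [l Hl].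
  exists l. intro z. apply Rle_plus_epsilon. intros e He.
  set (K := hnorm A l + Rabs M + 1).
  assert (HK : 0 < K) by (pose proof (hnorm_ge0 l); pose proof (Rabs_pos M); unfold K; lra).
  destruct (Hl (e / 2 / K)) as [N1 HN1]; [apply Rdiv_lt_0_compat; lra |].
  destruct (inv_succ_small (e / 2)) as [N2 HN2]; [lra |].
  set (n := (N1 + N2)%nat).
  pose proof (HN1 n ltac:(unfold n; lia)) as Hclose. rewrite hnorm_hsub_sym in Hclose.
  pose proof (energy_perturb l (hsub l (s n))) as Hpert.
  replace (hsub l (hsub l (s n))) with (s n) in Hpert by vring.
  assert ((hnorm A l + M) * hnorm A (hsub l (s n)) <= e / 2).
  { pose proof (hnorm_ge0 (hsub l (s n))). pose proof (Rle_abs M).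
    apply Rle_trans with (K * hnorm A (hsub l (s n))); [apply Rmult_le_compat_r; unfold K; lra |].
    apply Rlt_le in Hclose. apply (Rmult_le_compat_l K) in Hclose; [| lra].
    replace (K * (e / 2 / K)) with (e / 2) in Hclose by (field; lra). lra. }
  pose proof (Hs n). pose proof (HN2 n ltac:(unfold n; lia)). pose proof (Hm z). lra.
Qed.

End Riesz.

Lemma riesz_representation {A : HilbertQuasiStarAlgebra} (w : A -> Cplx) :
  linear_functional A w -> norm_continuous A w -> exists eta, forall xi, w xi = << xi, eta >>.
Proof.
  intros hw [M HM]. destruct (energy_minimizer_exists w hw M HM) as [l Hl].
  exists l. exact (energy_minimizer_represents w hw l Hl).
Qed.

(** * Uniform boundedness *)

Definition hump_weight (k : nat) : R := (/ 4) ^ k.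

Lemma hump_weight_pos k : 0 < hump_weight k.
Proof. apply pow_lt. lra. Qed.

Lemma hump_weight_S k : hump_weight (S k) = hump_weight k / 4.
Proof. unfold hump_weight. simpl. field. Qed.

Definition sign (x : R) : R := if Rle_dec 0 x then 1 else -1.

Lemma sign_mul_abs x : Rabs x = sign x * x.
Proof. unfold sign. destruct (Rle_dec 0 x); [rewrite Rabs_right | rewrite Rabs_left]; lra. Qed.

Lemma Rabs_sign_mul x y : Rabs (sign x * y) = Rabs y.
Proof.
  unfold sign. destruct (Rle_dec 0 x); rewrite Rabs_mult; [rewrite Rabs_R1 | rewrite Rabs_left by lra]; ring.
Qed.

Section GlidingHump.
Context {A : HilbertQuasiStarAlgebra} (g : nat -> A) (g_nonzero : forall k, 0 < hnorm A (g k)).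

(* Step [k] moves by [hump_weight k / 2] along [g k], with the sign that pushes
   [Re <c, g k>] away from [0]; later steps are too small to undo this. *)
Fixpoint hump_seq (k : nat) : A :=
  match k with
  | O => 0h
  | S k => hump_seq k +h
      mkC (sign (Re << hump_seq k, g k >>) * (hump_weight k / (2 * hnorm A (g k)))) 0 *h g k
  end.

Lemma hump_step k : hnorm A (hsub (hump_seq (S k)) (hump_seq k)) = hump_weight k / 2.
Proof.
  cbn [hump_seq].
  match goal with |- hnorm A (hsub (?x +h ?y) _) = _ => replace (hsub (x +h y) x) with y by vring end.
  pose proof (hump_weight_pos k). pose proof (g_nonzero k).
  rewrite hnorm_scal, Cabs_real, Rabs_sign_mul, Rabs_right.
  - field. lra.
  - apply Rle_ge, Rlt_le, Rdiv_lt_0_compat; lra.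
Qed.

Lemma hump_dist m n : (m <= n)%nat ->
  hnorm A (hsub (hump_seq n) (hump_seq m)) <= 2 / 3 * (hump_weight m - hump_weight n).
Proof.
  induction 1 as [| n _ IH].
  - replace (hsub (hump_seq m) (hump_seq m)) with (0h : A) by vring. rewrite hnorm_0. lra.
  - eapply Rle_trans; [apply (hnorm_hsub_triangle _ (hump_seq n)) |].
    rewrite hump_step, hump_weight_S. lra.
Qed.

Lemma hump_dist_le m n : (m <= n)%nat ->
  hnorm A (hsub (hump_seq n) (hump_seq m)) <= 2 / 3 * hump_weight m.
Proof. intro Hmn. pose proof (hump_dist m n Hmn). pose proof (hump_weight_pos n). lra. Qed.

Lemma hump_cauchy : cauchy hump_seq.
Proof.
  intros e He.
  destruct (pow_lt_1_zero (/ 4) ltac:(rewrite Rabs_right; lra) (e / 2) ltac:(lra)) as [N HN].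
  exists N. intros n m Hn Hm.
  specialize (HN N (le_n _)). rewrite Rabs_right in HN by (apply Rle_ge, Rlt_le, hump_weight_pos).
  eapply Rle_lt_trans; [apply (hnorm_hsub_triangle _ (hump_seq N)) |].
  rewrite (hnorm_hsub_sym (hump_seq N)).
  pose proof (hump_dist_le N n Hn). pose proof (hump_dist_le N m Hm). fold (hump_weight N) in HN. lra.
Qed.

Lemma hump_limit_dist z : converges hump_seq z ->
  forall m, hnorm A (hsub z (hump_seq m)) <= 2 / 3 * hump_weight m.
Proof.
  intros Hz m. apply Rle_plus_epsilon. intros e He. destruct (Hz e He) as [N HN].
  pose proof (HN (N + m)%nat ltac:(lia)) as Hclose. rewrite hnorm_hsub_sym in Hclose.
  pose proof (hump_dist_le m (N + m)%nat ltac:(lia)).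
  pose proof (hnorm_hsub_triangle z (hump_seq (N + m)%nat) (hump_seq m)). lra.
Qed.

Lemma hump_step_inner k :
  hump_weight k * hnorm A (g k) / 2 <= Rabs (Re << hump_seq (S k), g k >>).
Proof.
  cbn [hump_seq]. rewrite inner_addl, inner_scall. csimpl. rewrite inner_Im_diag, <- hnorm_sqr.
  set (r := Re << hump_seq k, g k >>). pose proof (hump_weight_pos k). pose proof (g_nonzero k).
  replace (r + (sign r * (hump_weight k / (2 * hnorm A (g k))) * (hnorm A (g k) * hnorm A (g k))
      - 0 * 0)) with (sign r * (Rabs r + hump_weight k * hnorm A (g k) / 2))
    by (rewrite sign_mul_abs; unfold sign; destruct (Rle_dec 0 r); field; lra).
  pose proof (Rabs_pos r).
  assert (0 < hump_weight k * hnorm A (g k) / 2) by (apply Rdiv_lt_0_compat; nra).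
  rewrite Rabs_sign_mul, Rabs_right; lra.
Qed.

Lemma gliding_hump : exists z, forall k, hump_weight k * hnorm A (g k) / 3 <= Cabs << z, g k >>.
Proof.
  destruct (cauchy_converges hump_seq hump_cauchy) as [z Hz]. exists z. intro k.
  set (c := hump_seq (S k)).
  assert (Hsplit : << z, g k >> = Cadd << hsub z c, g k >> << c, g k >>)
    by (rewrite <- inner_addl; f_equal; vring).
  assert (Htail : Cabs << hsub z c, g k >> <= hump_weight k * hnorm A (g k) / 6).
  { eapply Rle_trans; [apply cauchy_schwarz |].
    pose proof (hump_limit_dist z Hz (S k)) as Hd. fold c in Hd. rewrite hump_weight_S in Hd.
    pose proof (g_nonzero k).
    apply Rle_trans with (2 / 3 * (hump_weight k / 4) * hnorm A (g k)).
    - apply Rmult_le_compat_r; lra.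
    - right. field. }
  pose proof (hump_step_inner k) as Hstep. fold c in Hstep.
  pose proof (f_equal Re Hsplit) as HRe. simpl in HRe.
  pose proof (Rabs_Re_le_Cabs << hsub z c, g k >>). pose proof (Rabs_Re_le_Cabs << z, g k >>).
  pose proof (Rabs_triang_inv (Re << c, g k >>) (- Re << hsub z c, g k >>)) as Htri.
  rewrite Rabs_Ropp in Htri.
  replace (Re << c, g k >> - - Re << hsub z c, g k >>) with (Re << z, g k >>) in Htri by lra.
  lra.
Qed.

End GlidingHump.

Lemma uniform_boundedness {A : HilbertQuasiStarAlgebra} {I : Type}
  (P : I -> Prop) (f : I -> A) (s : I -> R) :
  (forall i, 0 <= s i) ->
  (forall z, exists c, forall i, P i -> Cabs << z, f i >> <= c * s i) ->
  exists C, forall i, P i -> hnorm A (f i) <= C * s i.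
Proof.
  intros Hs Hweak. apply NNPP. intro Hunb.
  (* Otherwise pick [f (idx k)] larger than [4 (k+1) 4^k s (idx k)]; the gliding hump [z]
     then violates the weak bound at [z]. *)
  assert (Hbig : forall C, exists i, P i /\ C * s i < hnorm A (f i)).
  { intro C. apply NNPP. intro HC. apply Hunb. exists C. intros i Hi.
    apply Rnot_lt_le. intro Hlt. apply HC. exists i. auto. }
  set (K := fun k : nat => 4 * (INR k + 1) / hump_weight k).
  destruct (choice (fun k i => P i /\ K k * s i < hnorm A (f i)) (fun k => Hbig (K k)))
    as [idx Hidx].
  assert (HK : forall k, 0 <= K k).
  { intro k. unfold K. pose proof (pos_INR k). pose proof (hump_weight_pos k).
    apply Rmult_le_pos; [lra | apply Rlt_le, Rinv_0_lt_compat; lra]. }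
  destruct (gliding_hump (fun k => f (idx k))) as [z Hz].
  { intro k. destruct (Hidx k) as [_ H]. pose proof (HK k). pose proof (Hs (idx k)). nra. }
  destruct (Hweak z) as [c Hc]. destruct (nat_above c) as [k Hk].
  destruct (Hidx k) as [HP Hgt]. specialize (Hz k). specialize (Hc (idx k) HP). cbv beta in Hz.
  pose proof (hump_weight_pos k). pose proof (Hs (idx k)). pose proof (pos_INR k).
  assert (Hlarge : 4 * (INR k + 1) * s (idx k) < hump_weight k * hnorm A (f (idx k))).
  { replace (4 * (INR k + 1)) with (hump_weight k * K k) by (unfold K; field; lra).
    rewrite Rmult_assoc. apply Rmult_lt_compat_l; auto. }
  assert (c * s (idx k) <= (INR k + 1) * s (idx k)) by (apply Rmult_le_compat_r; lra).
  nra.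
Qed.

(** * w-positive elements *)

Section WPositive.
Context {A : HilbertQuasiStarAlgebra} (eta : A) (eta_pos : w_positive A eta).

Lemma w_positive_hermitian x y : A0 A x -> A0 A y -> << eta @ x, y >> = Cconj << eta @ y, x >>.
Proof.
  intros Hx Hy.
  assert (Hiy : A0 A (mkC 0 1 *h y)) by (apply A0_scal; auto).
  destruct (eta_pos (x +h y) (A0_add A x y Hx Hy)) as [Ixy _].
  destruct (eta_pos (x +h mkC 0 1 *h y) (A0_add A _ _ Hx Hiy)) as [Ixiy _].
  destruct (eta_pos x Hx) as [Ix _]. destruct (eta_pos y Hy) as [Iy _].
  rewrite mul_addl_A0, !inner_addl, !inner_addr in Ixy by auto.
  rewrite mul_addl_A0, mul_scall_A0, !inner_addl, !inner_addr, !inner_scall, !inner_scalr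
    in Ixiy by auto.
  csimpl. rewrite Ix, Iy in Ixiy. apply Cext; simpl; nra.
Qed.

(* Both [eta] and [eta^*] induce the form [<eta x, y>] on [A0], so they agree by (A). *)
Lemma w_positive_self_adjoint : eta^* = eta.
Proof.
  assert (Hform : forall x y, A0 A x -> A0 A y -> << eta @ x, y >> = << eta^* @ x, y >>).
  { intros x y Hx Hy.
    rewrite (w_positive_hermitian x y Hx Hy), <- inner_conj, (inner_star x), star_rmul,
      inner_lmul, star_invol, inner_rmul by auto using A0_star.
    reflexivity. }
  assert (Hmul : forall x, A0 A x -> eta @ x = eta^* @ x).
  { intros x Hx. apply inner_ext. by_density. intros; apply Hform; auto. }
  assert (Hdiff : hsub eta (eta^*) = 0h).
  { apply cond_A. intros x Hx. unfold hsub.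
    rewrite mul_addl, hopp_scal, mul_scall, Hmul by auto. vring. }
  replace (eta^*) with (eta^* +h hsub eta (eta^*)) by (rewrite Hdiff; apply hadd_zero).
  vring.
Qed.

Lemma w_positive_cauchy_schwarz y v : A0 A y -> A0 A v ->
  Re << eta @ y, v >> * Re << eta @ y, v >> + Im << eta @ y, v >> * Im << eta @ y, v >>
  <= Re << eta @ y, y >> * Re << eta @ v, v >>.
Proof.
  apply (cauchy_schwarz_form (fun a b => << eta @ a, b >>) (A0 A) (A0_add A) (A0_scal A)).
  - intros a b c Ha Hb Hc. rewrite mul_addl_A0, inner_addl by auto. reflexivity.
  - intros a b c Hb Hc. rewrite mul_scall_A0, inner_scall by auto. reflexivity.
  - exact w_positive_hermitian.
  - intros a Ha. apply (eta_pos a Ha).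
Qed.

Context (M : R) (M_nonneg : 0 <= M)
  (eta_bounded : forall x, A0 A x -> hnorm A (eta @ x) <= M * hnorm A x).

Lemma w_positive_form_le x : A0 A x -> Re << eta @ x, x >> <= M * nsq x.
Proof.
  intro Hx. pose proof (Re_le_Cabs << eta @ x, x >>).
  pose proof (cauchy_schwarz (eta @ x) x). pose proof (eta_bounded x Hx).
  pose proof (hnorm_ge0 x). pose proof (hnorm_ge0 (eta @ x)). rewrite <- hnorm_sqr. nra.
Qed.

(* Cauchy-Schwarz for [<eta ., .>] gives [|<eta y, v>| <= (M <eta y, y>)^(1/2) |v|] on [A0],
   hence on all of [H]; now take [v = eta y]. *)
Lemma w_positive_bounded_sqr y : A0 A y -> nsq (eta @ y) <= M * Re << eta @ y, y >>.
Proof.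
  intro Hy.
  set (qy := Re << eta @ y, y >>).
  assert (Hqy : 0 <= qy) by apply (eta_pos y Hy).
  set (K := sqrt (qy * M)).
  assert (HK : 0 <= K) by apply sqrt_pos.
  assert (HKK : K * K = qy * M) by (apply sqrt_sqrt; nra).
  assert (Hall : forall v, Cabs << eta @ y, v >> <= K * hnorm A v).
  { apply norm_bound_from_A0; auto.
    - apply (additive_inner_r (fun u => u)), additive_id.
    - apply (continuous_inner_r (fun u => u)), bounded_id.
    - intros v Hv. pose proof (hnorm_ge0 v). apply Cabs_le_sqr; [nra |].
      replace (K * hnorm A v * (K * hnorm A v)) with ((K * K) * (hnorm A v * hnorm A v)) by ring.
      rewrite HKK, hnorm_sqr.
      pose proof (w_positive_cauchy_schwarz y v Hy Hv) as Hcs. fold qy in Hcs.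
      pose proof (w_positive_form_le v Hv). destruct (eta_pos v Hv) as [_ Hqv]. nra. }
  pose proof (Hall (eta @ y)). pose proof (Re_le_Cabs << eta @ y, eta @ y >>).
  rewrite <- hnorm_sqr in *. pose proof (hnorm_ge0 (eta @ y)).
  assert (hnorm A (eta @ y) <= K) by nra. nra.
Qed.

End WPositive.

Lemma bound_of_sqr_le_mul n m t C : 0 <= n -> 0 <= m -> 0 <= t ->
  t * t <= m * n -> n <= C * t -> n <= C * C * m.
Proof.
  intros Hn Hm Ht H1 H2. destruct (Req_dec t 0).
  - subst. assert (n = 0) by lra. subst. nra.
  - assert (t <= C * m) by nra. nra.
Qed.

Section Representation.
Context {A : HilbertQuasiStarAlgebra} (w : A -> Cplx) (eta : A)
  (w_repr : forall xi, w xi = << xi, eta >>).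

Lemma repr_w_positive :
  (forall x, A0 A x -> Im (w (x^* @ x)) = 0 /\ 0 <= Re (w (x^* @ x))) -> w_positive A eta.
Proof.
  intros L1 x Hx. destruct (L1 (x^*) (A0_star A x Hx)) as [I R].
  rewrite star_invol, w_repr, inner_rmul, star_invol, inner_conj in I, R by auto using A0_star.
  csimpl. split; lra.
Qed.

(* (L.3) says that the vectors [eta x^*], weighted by [w(x^* x)^(1/2)], are weakly bounded. *)
Lemma repr_bounded :
  (forall x, A0 A x -> 0 <= Re (w (x^* @ x))) ->
  (forall xi, exists g, 0 < g /\ forall x, A0 A x ->
     Cabs (w (xi^* @ x)) <= g * sqrt (Re (w (x^* @ x)))) ->
  bounded_elt A eta.
Proof.
  intros L1 L3.
  destruct (uniform_boundedness (A0 A) (fun x => eta @ x^*) (fun x => sqrt (Re (w (x^* @ x)))))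
    as [C HC].
  - intro; apply sqrt_pos.
  - intro z. destruct (L3 (z^*)) as [g [_ Hg]]. exists g. intros x Hx.
    specialize (Hg x Hx). rewrite star_invol, w_repr, inner_rmul in Hg by assumption. exact Hg.
  - exists (C * C). intros y Hy.
    specialize (HC (y^*) (A0_star A y Hy)). specialize (L1 (y^*) (A0_star A y Hy)).
    cbv beta in HC. rewrite star_invol in HC, L1.
    apply (bound_of_sqr_le_mul _ _ (sqrt (Re (w (y @ y^*))))); auto using hnorm_ge0, sqrt_pos.
    rewrite sqrt_sqrt, w_repr, inner_rmul, star_invol by auto using A0_star.
    eapply Rle_trans; [apply Re_le_Cabs | apply cauchy_schwarz].
Qed.

Lemma repr_norm_continuous : norm_continuous A w.
Proof.
  exists (hnorm A eta). intro u. rewrite w_repr.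
  eapply Rle_trans; [apply cauchy_schwarz | lra].
Qed.

Lemma repr_representable : w_positive A eta -> bounded_elt A eta -> representable A w.
Proof.
  intros eta_pos [M0 HM0].
  set (M := Rabs M0).
  assert (HM : forall x, A0 A x -> hnorm A (eta @ x) <= M * hnorm A x).
  { intros x Hx. eapply Rle_trans; [apply HM0; auto |].
    apply Rmult_le_compat_r; [apply hnorm_ge0 | apply Rle_abs]. }
  assert (HMp : 0 <= M) by apply Rabs_pos.
  split; [| split].
  - intros x Hx. rewrite w_repr, inner_rmul, inner_conj by assumption.
    destruct (eta_pos (x^*) (A0_star A x Hx)) as [I R]. csimpl. split; lra.
  - intros x y xi Hx Hy. rewrite !w_repr.
    rewrite (inner_lmul (y^*)), star_invol, inner_rmul, (inner_lmul (x^*)), star_invol,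
      <- inner_conj, (inner_star (x @ eta)), star_rmul, star_lmul, (inner_lmul (y^*)),
      star_invol, (w_positive_self_adjoint eta eta_pos), mul_assoc_A0 by auto using A0_star.
    reflexivity.
  - intro xi. exists (hnorm A xi * sqrt M + 1). split.
    { pose proof (hnorm_ge0 xi). pose proof (sqrt_pos M). nra. }
    intros x Hx. rewrite !w_repr, !inner_rmul by assumption.
    set (y := x^*). assert (Hy : A0 A y) by (apply A0_star; auto).
    pose proof (w_positive_bounded_sqr eta eta_pos M HMp HM y Hy) as P.
    set (q := Re << eta @ y, y >>) in P.
    assert (Hq : 0 <= q) by apply (eta_pos y Hy).
    rewrite (inner_Re_sym y). fold q.
    assert (Hn : hnorm A (eta @ y) <= sqrt M * sqrt q).
    { rewrite <- sqrt_mult by auto. apply sqrt_le_1_alt. exact P. }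
    eapply Rle_trans; [apply cauchy_schwarz |]. rewrite hnorm_star.
    pose proof (hnorm_ge0 xi). pose proof (sqrt_pos q). pose proof (sqrt_pos M).
    apply Rle_trans with (hnorm A xi * (sqrt M * sqrt q)); [apply Rmult_le_compat_l; auto | nra].
Qed.

End Representation.

Theorem mainTheorem11 (A : HilbertQuasiStarAlgebra) (w : A -> Cplx)
  (hw : linear_functional A w) :
  Rc A w <->
  (exists! eta : A, bounded_elt A eta /\ w_positive A eta /\
     forall xi : A, w xi = inner A xi eta).
Proof.
  split.
  - intros [[L1 [_ L3]] w_cont].
    destruct (riesz_representation w hw w_cont) as [eta w_repr].
    exists eta. split.
    + split; [| split; [apply (repr_w_positive w eta w_repr L1) | exact w_repr]].
      apply (repr_bounded w eta w_repr); [intros x Hx; apply (L1 x Hx) | exact L3].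
    + intros eta' [_ [_ w_repr']]. apply inner_ext. intro z.
      rewrite (inner_conj A eta), (inner_conj A eta'), <- w_repr, <- w_repr'. reflexivity.
  - intros [eta [[eta_bdd [eta_pos w_repr]] _]]. split.
    + exact (repr_representable w eta w_repr eta_pos eta_bdd).
    + exact (repr_norm_continuous w eta w_repr).
Qed.
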